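(* Let $(\mathcal T(n))_{n\in\mathbb N}$ be the triangle Markov chain obtained by iterated random barycentric subdivision started from an arbitrary triangle, and let $(X_n,Y_n)$ be the characterizing point of $\mathcal T(n)$. Then almost surely the limit set $\bigcap_{p\in\mathbb N}\overline{\{X_n: n\ge p\}}$ of the sequence $(X_n)_{n\in\mathbb N}$ equals $[0,1/2]$.
   Context: A triangle is given by three points of the plane which are not all equal. Barycentric subdivision: if a triangle has vertices $A,B,C$, let $D,E,F$ be the midpoints of $[A,B],[B,C],[C,A]$ and $G$ its barycenter; the medians cut it into the six triangles $\{A,D,G\},\{D,B,G\},\{B,E,G\},\{E,C,G\},\{C,F,G\},\{F,A,G\}$. The triangle Markov chain: $\mathcal T(0)$ is given and $\mathcal T(n+1)$ is chosen uniformly among the six triangles of the barycentric subdivision of $\mathcal T(n)$, independently of the past. Characterizing point: there is a similitude mapping the triangle onto a triangle with vertices $(0,0)$, $(1,0)$, $(x,y)$, $0\le x\le1/2$, $y\ge0$, sending its longest edge onto $[(0,0),(1,0)]$ and its shortest edge onto $[(0,0),(x,y)]$; $(x,y)$ is unique and is the characterizing point. *)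

From HB Require Import structures.
From mathcomp Require Import all_boot all_order all_algebra.
From mathcomp Require Import all_classical all_reals all_analysis.
Set Implicit Arguments. Unset Strict Implicit. Unset Printing Implicit Defensive.
Import Order.TTheory GRing.Theory Num.Theory.
Import numFieldNormedType.Exports.
Local Open Scope classical_set_scope.
Local Open Scope ring_scope.

Section Tri.
Variable R : realType.

Definition point := (R * R)%type.

Definition sqdist (u v : point) : R := (u.1 - v.1) ^+ 2 + (u.2 - v.2) ^+ 2.

Definition midpoint (u v : point) : point := ((u.1 + v.1) / 2, (u.2 + v.2) / 2).

Definition barycenter (a b c : point) : point :=
  ((a.1 + b.1 + c.1) / 3, (a.2 + b.2 + c.2) / 3).

Definition triangle := (point * point * point)%type.

Definition tri_ok (t : triangle) : Prop :=
  let: (a, b, c) := t in ~ (a = b /\ b = c).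

Definition subtri (t : triangle) (k : nat) : triangle :=
  let: (a, b, c) := t in
  let d := midpoint a b in let e := midpoint b c in let f := midpoint c a in
  let g := barycenter a b c in
  match k with
  | 0 => (a, d, g) | 1 => (d, b, g) | 2 => (b, e, g)
  | 3 => (e, c, g) | 4 => (c, f, g) | _ => (f, a, g)
  end.

Fixpoint tri_chain (t0 : triangle) (xi : nat -> nat) (n : nat) : triangle :=
  match n with
  | 0 => t0
  | m.+1 => subtri (tri_chain t0 xi m) (xi m)
  end.

Definition similitude (f : point -> point) : Prop :=
  exists k : R, 0 < k /\ forall u v, sqdist (f u) (f v) = k ^+ 2 * sqdist u v.

(* (x,y) is the characterizing point of t: a similitude maps the triangle onto
   the triangle (0,0),(1,0),(x,y), 0 <= x <= 1/2, y >= 0, the longest edge [p,q]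
   going onto [(0,0),(1,0)] and the shortest edge [p,r] onto [(0,0),(x,y)]. *)
Definition is_char_point (t : triangle) (xy : point) : Prop :=
  let: (a, b, c) := t in
  0 <= xy.1 <= 2^-1 /\ 0 <= xy.2 /\
  exists p q r : point,
    perm_eq [:: p; q; r] [:: a; b; c] /\
    sqdist q r <= sqdist p q /\ sqdist p r <= sqdist p q /\
    sqdist p r <= sqdist q r /\
    exists f, similitude f /\ f p = (0, 0) /\ f q = (1, 0) /\ f r = xy.

Definition char_point (t : triangle) : point := xget (0, 0) (is_char_point t).

End Tri.

From Pilot Require Import Defs.
From HB Require Import structures.
From mathcomp Require Import all_boot all_order all_algebra.
From mathcomp Require Import all_classical all_reals all_analysis.
From mathcomp Require Import ring lra zify.
Import Order.TTheory GRing.Theory Num.Theory.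
Import numFieldNormedType.Exports.
Set Implicit Arguments. Unset Strict Implicit. Unset Printing Implicit Defensive.
Local Open Scope classical_set_scope.
Local Open Scope ring_scope.

(* Send a triangle (a, b, c) to (0, 1, z) by a similitude: z is its shape.
   The subtriangles 0 and 1 act on z by the contractions z |-> (2z + 2)/3 and
   z |-> (2z - 1)/3, with fixed points 2 and -1, so a suitable word of length n
   in these two moves brings Re z within (2/3)^n * 4 of any x0 in [-1, 2] while
   (Im z)^2 is multiplied by (4/9)^n.  When z is near a real x0 in (0, 1/2),
   [ab] is the longest side and [ac] the shortest, and the characterizing point
   is near x0.  So from every triangle some word of a fixed length N brings X
   within eps of x0; uniform independent choices follow such a word in each
   block of N steps with probability 6^-N, hence X comes within eps of x0
   infinitely often almost surely.  Rational x0 and eps = 1/(j+1) give the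
   limit set [0, 1/2]. *)

Section Digits.
Local Open Scope nat_scope.
Variable b : nat.
Hypothesis b_gt0 : 0 < b.

Definition digit (c i : nat) : nat := (c %/ b ^ i) %% b.

Definition digits (M c : nat) : seq nat := mkseq (digit c) M.

Lemma digit_lt c i : digit c i < b.
Proof. exact: ltn_pmod. Qed.

Lemma digit0 c : digit c 0 = c %% b.
Proof. by rewrite /digit expn0 divn1. Qed.

Lemma digitS c i : digit c i.+1 = digit (c %/ b) i.
Proof. by rewrite /digit expnS divnMA. Qed.

Lemma digit_inj M c c' : c < b ^ M -> c' < b ^ M ->
  (forall i, i < M -> digit c i = digit c' i) -> c = c'.
Proof.
elim: M c c' => [|M IH] c c'; first by rewrite expn0 !ltnS !leqn0 => /eqP -> /eqP ->.
move=> hc hc' E; rewrite (divn_eq c b) (divn_eq c' b) -!digit0 E //.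
congr (_ * _ + _); apply: IH; rewrite ?ltn_divLR // -?expnSr //.
by move=> i hi; rewrite -!digitS E.
Qed.

Lemma digit_surj M (a : nat -> nat) : (forall i, i < M -> a i < b) ->
  exists2 c, c < b ^ M & forall i, i < M -> digit c i = a i.
Proof.
elim: M a => [|M IH] a ha; first by exists 0.
have [c hc Hc] := IH (fun i => a i.+1) (fun i hi => ha i.+1 hi).
have a0 := ha 0 isT.
exists (a 0 + b * c); first by rewrite expnS; nia.
case=> [|i] hi; first by rewrite digit0 addnC mulnC modnMDl modn_small.
by rewrite digitS mulnC divnDMl // divn_small // add0n Hc.
Qed.

Lemma digits_surj M s : size s = M -> all (fun x => x < b) s ->
  exists2 c, c < b ^ M & digits M c = s.
Proof.
move=> sz /all_nthP hs; have [i hi|c hc Hc] := @digit_surj M (nth 0 s).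
  by apply: hs; rewrite sz.
exists c => //; apply: (eq_from_nth (x0 := 0)); rewrite size_mkseq // => i hi.
by rewrite nth_mkseq // Hc.
Qed.

End Digits.

Lemma exists_expr_lt (R : realType) (q e : R) : 0 <= q < 1 -> 0 < e ->
  exists n, q ^+ n < e.
Proof.
move=> /andP[q0 q1] e0; have q1' : `|q| < 1 by rewrite ger0_norm.
have /cvgr0_norm_lt/(_ e e0) [N _ HN] := cvg_expr q1'.
by exists N; have := HN N (leqnn N); rewrite /= ger0_norm ?exprn_ge0.
Qed.

Definition cat_word (p : nat) (k : nat -> nat) (s : seq nat) (i : nat) : nat :=
  if (i < p)%N then k i else nth 0%N s (i - p).

Lemma cat_word_ltn p k s i : (i < p)%N -> cat_word p k s i = k i.
Proof. by rewrite /cat_word => ->. Qed.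

Lemma cat_word_addn p k s i : cat_word p k s (p + i) = nth 0%N s i.
Proof. by rewrite /cat_word ltnNge leq_addr /= addKn. Qed.

Lemma cat_word_rcons p k s x i : (i < p + size s)%N ->
  cat_word p k (rcons s x) i = cat_word p k s i.
Proof.
move=> hi; rewrite /cat_word; case: ltnP => // ip.
by rewrite nth_rcons ifT //; lia.
Qed.

Section Geometry.
Variable R : realType.
Implicit Types (a b c : Defs.point R) (t : triangle R).

Lemma sqdist_ge0 a b : 0 <= sqdist a b.
Proof. by rewrite /sqdist addr_ge0 ?sqr_ge0. Qed.

Lemma sqdistC a b : sqdist a b = sqdist b a.
Proof. by rewrite /sqdist; ring. Qed.

Lemma sqdistxx a : sqdist a a = 0.
Proof. by rewrite /sqdist !subrr expr0n /= addr0. Qed.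

Lemma sqdist_eq0 a b : sqdist a b = 0 -> a = b.
Proof.
case: a b => [a1 a2] [b1 b2]; rewrite /sqdist /= => H.
have /eqP : (a1 - b1) ^+ 2 = 0 by have := sqr_ge0 (a2 - b2); have := sqr_ge0 (a1 - b1); lra.
have /eqP : (a2 - b2) ^+ 2 = 0 by have := sqr_ge0 (a2 - b2); have := sqr_ge0 (a1 - b1); lra.
by rewrite !sqrf_eq0 !subr_eq0 => /eqP -> /eqP ->.
Qed.

Definition sqAB t : R := let: (a, b, _) := t in sqdist a b.
Definition sqAC t : R := let: (a, _, c) := t in sqdist a c.
Definition dotA t : R := let: (a, b, c) := t in
  (b.1 - a.1) * (c.1 - a.1) + (b.2 - a.2) * (c.2 - a.2).

Lemma sqAB_ge0 t : 0 <= sqAB t.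
Proof. by case: t => [[a b] c]; apply: sqdist_ge0. Qed.

Lemma sqAC_ge0 t : 0 <= sqAC t.
Proof. by case: t => [[a b] c]; apply: sqdist_ge0. Qed.

Lemma dotA_sqr_le t : dotA t ^+ 2 <= sqAB t * sqAC t.
Proof.
case: t => [[[a1 a2] [b1 b2]] [c1 c2]]; rewrite /dotA /sqAB /sqAC /sqdist /=.
have := sqr_ge0 ((b1 - a1) * (c2 - a2) - (b2 - a2) * (c1 - a1)); nra.
Qed.

Lemma sqdist_cosine a b c :
  sqdist b c = sqAB (a, b, c) - 2 * dotA (a, b, c) + sqAC (a, b, c).
Proof.
case: a b c => [a1 a2] [b1 b2] [c1 c2]; rewrite /dotA /sqAB /sqAC /sqdist /=; ring.
Qed.

Lemma subtri0_sides t : [/\ sqAB (subtri t 0) = sqAB t / 4,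
  dotA (subtri t 0) = (sqAB t + dotA t) / 6 &
  sqAC (subtri t 0) = (sqAB t + 2 * dotA t + sqAC t) / 9].
Proof.
case: t => [[[a1 a2] [b1 b2]] [c1 c2]].
by rewrite /dotA /sqAB /sqAC /sqdist /midpoint /barycenter /=; split; field.
Qed.

Lemma subtri1_sides t : [/\ sqAB (subtri t 1) = sqAB t / 4,
  dotA (subtri t 1) = (2 * dotA t - sqAB t) / 12 &
  sqAC (subtri t 1) = (4 * sqAC t - 4 * dotA t + sqAB t) / 36].
Proof.
case: t => [[[a1 a2] [b1 b2]] [c1 c2]].
by rewrite /dotA /sqAB /sqAC /sqdist /midpoint /barycenter /=; split; field.
Qed.

Lemma subtri4_sides t : sqAB (subtri t 4) = sqAC t / 4 /\
  sqAC (subtri t 4) = (sqAB t - 4 * dotA t + 4 * sqAC t) / 9.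
Proof.
case: t => [[[a1 a2] [b1 b2]] [c1 c2]].
by rewrite /dotA /sqAB /sqAC /sqdist /midpoint /barycenter /=; split; field.
Qed.

Lemma tri_ok_subtri t k : tri_ok t -> tri_ok (subtri t k).
Proof.
case: t => [[[a1 a2] [b1 b2]] [c1 c2]] /= H.
by case: k => [|[|[|[|[|k]]]]]; rewrite /midpoint /barycenter /= => -[[E1 E2] [E3 E4]];
  apply: H; split; congr pair; lra.
Qed.

Lemma tri_ok_sides t : tri_ok t -> 0 < sqAB t + sqAC t.
Proof.
case: t => [[a b] c] /= H; have := sqdist_ge0 a b; have := sqdist_ge0 a c.
case: (ltrP 0 (sqdist a b + sqdist a c)) => // h g1 g2; exfalso; apply: H.
have Eab : sqdist a b = 0 by lra.
have Eac : sqdist a c = 0 by lra.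
by split; [|rewrite -(sqdist_eq0 Eab)]; apply: sqdist_eq0.
Qed.

(* The abscissa and the squared ordinate of [c] once a similitude sends [a]
   and [b] to [0] and [1]. *)
Definition shape_x t : R := dotA t / sqAB t.
Definition shape_h2 t : R := sqAC t / sqAB t - shape_x t ^+ 2.

Lemma shape_h2_ge0 t : 0 < sqAB t -> 0 <= shape_h2 t.
Proof.
move=> L0; rewrite /shape_h2 /shape_x subr_ge0 expr_div_n ler_pdivrMr ?exprn_gt0 //.
apply: le_trans (dotA_sqr_le t) _.
by rewrite [sqAB t ^+ 2]expr2 mulrA divfK ?gt_eqF // mulrC.
Qed.

Lemma shape_subtri01 (l : bool) t : 0 < sqAB t ->
  [/\ 0 < sqAB (subtri t l),
      shape_x (subtri t l) = (2 * shape_x t + (if l then -1 else 2)) / 3 &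
      shape_h2 (subtri t l) = 4 / 9 * shape_h2 t].
Proof.
move=> L0; have L0' : sqAB t != 0 by rewrite gt_eqF.
rewrite /shape_h2 /shape_x; case: l.
  by have [-> -> ->] := subtri1_sides t; split; [lra | field | field].
by have [-> -> ->] := subtri0_sides t; split; [lra | field | field].
Qed.

Definition run t (s : seq nat) : triangle R := foldl (@subtri R) t s.

Lemma steer_shape n (x : R) : -1 <= x <= 2 ->
  exists s : seq nat, [/\ size s = n, all (fun k => k < 6)%N s &
    exists2 x', -1 <= x' <= 2 & forall t, 0 < sqAB t ->
      [/\ 0 < sqAB (run t s),
          shape_x (run t s) - x = (2 / 3) ^+ n * (shape_x t - x') &
          shape_h2 (run t s) = (4 / 9) ^+ n * shape_h2 t]].
Proof.
elim: n x => [|n IH] x /andP[x_ge x_le].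
  by exists [::]; split => //; exists x => [|t L0]; rewrite ?x_ge ?x_le // /run !mul1r.
(* Last move 1 if x < 0 and 0 otherwise: the preimage of x stays in [-1, 2]. *)
have y_itv : -1 <= (3 * x - (if x < 0 then -1 else 2)) / 2 <= 2.
  by case: (ltrP x 0) => x0; apply/andP; split; lra.
have [s [sz s6 [x' x'_itv Hs]]] := IH _ y_itv.
exists (rcons s (x < 0)); split; first by rewrite size_rcons sz.
  by rewrite all_rcons s6 andbT; case: (x < 0).
exists x' => // t L0; have [L1 E1 E2] := Hs t L0.
rewrite /run foldl_rcons -/(run t s); have [L2 -> ->] := shape_subtri01 (x < 0) L1.
split => //; last by rewrite E2 exprS mulrA.
by rewrite exprS -mulrA -E1; field.
Qed.

Lemma exists_subtri_shape_bounded t : tri_ok t ->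
  exists2 l, (l < 6)%N & 0 < sqAB (subtri t l) /\ sqAC (subtri t l) <= 4 * sqAB (subtri t l).
Proof.
move=> ok; have LS := tri_ok_sides ok; have CS := dotA_sqr_le t.
have gL := sqAB_ge0 t; have gS := sqAC_ge0 t.
have [SL|LS'] := lerP (sqAC t) (sqAB t).
  exists 0%N => //; have [-> _ ->] := subtri0_sides t.
  have : dotA t <= sqAB t by nra.
  by split; lra.
exists 4%N => //; have [-> ->] := subtri4_sides t.
have : - dotA t <= sqAC t by nra.
by split; lra.
Qed.

Lemma similitude_abscissa (f : Defs.point R -> Defs.point R) a b c xy :
  similitude f -> f a = (0, 0) -> f b = (1, 0) -> f c = xy ->
  xy.1 = dotA (a, b, c) / sqAB (a, b, c).
Proof.
case=> k [_ Hk] fa fb fc.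
have E1 := Hk a b; have E2 := Hk a c; have E3 := Hk b c.
rewrite (sqdist_cosine a b c) fa fb fc in E1 E2 E3.
change (sqdist a b) with (sqAB (a, b, c)) in E1.
change (sqdist a c) with (sqAC (a, b, c)) in E2.
move: (sqAB _) (sqAC _) (dotA _) (k ^+ 2) E1 E2 E3 => L S I K2; clear Hk fa fb.
case: xy {fc} => x y; rewrite /sqdist /= => E1 E2 E3.
have K : K2 * L = 1 by lra.
have L0 : L != 0 by apply/eqP => L0; rewrite L0 mulr0 in K; lra.
have -> : x = K2 * I by lra.
by apply: (mulIf L0); rewrite divfK // mulrAC K mul1r.
Qed.

Lemma perm_sides_sorted a b c p q r :
  sqdist b c < sqdist a b -> sqdist a c < sqdist b c ->
  perm_eq [:: p; q; r] [:: a; b; c] ->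
  sqdist q r <= sqdist p q -> sqdist p r <= sqdist p q -> sqdist p r <= sqdist q r ->
  [/\ p = a, q = b & r = c].
Proof.
move=> bc_ab ac_bc pqr qr_pq pr_pq pr_qr.
have ab : a != b by apply/eqP=> E; move: bc_ab; rewrite E sqdistxx ltNge sqdist_ge0.
have bc : b != c by apply/eqP=> E; move: ac_bc; rewrite E sqdistxx ltNge sqdist_ge0.
have ac : a != c by apply/eqP=> E; move: bc_ab; rewrite E sqdistC ltxx.
have := perm_uniq pqr; rewrite /= !inE (negbTE ab) (negbTE ac) (negbTE bc) /= => upqr.
have mem x : x \in [:: p; q; r] -> x \in [:: a; b; c] by rewrite (perm_mem pqr).
have := mem p; have := mem q; have := mem r; rewrite !inE !eqxx ?orbT.
move=> /(_ isT) /or3P[] /eqP Er /(_ isT) /or3P[] /eqP Eq /(_ isT) /or3P[] /eqP Ep;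
  subst p q r; rewrite ?eqxx ?andbF // in upqr;
  move: qr_pq pr_pq pr_qr; rewrite ?(sqdistC b a) ?(sqdistC c a) ?(sqdistC c b); lra.
Qed.

Definition cross a b c : R := (b.1 - a.1) * (c.2 - a.2) - (b.2 - a.2) * (c.1 - a.1).

(* Coordinates in the orthogonal frame with origin [a] and unit vector [ab],
   reflected when [s] holds. *)
Definition frame a b (s : bool) (z : Defs.point R) : Defs.point R :=
  (dotA (a, b, z) / sqdist a b, (-1) ^+ s * cross a b z / sqdist a b).

Lemma frame_similitude a b s : a != b -> similitude (frame a b s).
Proof.
move=> ab; have L0 : 0 < sqdist a b.
  by rewrite lt_neqAle sqdist_ge0 andbT eq_sym; apply: contra ab => /eqP/sqdist_eq0 ->.
exists (Num.sqrt (sqdist a b)^-1); split; first by rewrite sqrtr_gt0 invr_gt0.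
move=> u v; rewrite sqr_sqrtr ?invr_ge0 ?ltW //.
move: L0; case: a b u v {ab} => [a1 a2] [b1 b2] [u1 u2] [v1 v2].
rewrite /frame /dotA /cross /sqdist /= => /lt0r_neq0 L0.
by case: s; rewrite ?expr0 ?expr1; field.
Qed.

Lemma is_char_point_frame a b c :
  sqdist b c < sqdist a b -> sqdist a c < sqdist b c ->
  is_char_point (a, b, c) (frame a b (cross a b c < 0) c).
Proof.
move=> bc_ab ac_bc; have := sqdist_cosine a b c; have := sqdist_ge0 a c.
rewrite /sqAB /sqAC /dotA => S0 BC.
have L0 : 0 < sqdist a b by have := sqdist_ge0 b c; lra.
have ab : a != b by apply/eqP => E; move: L0; rewrite E sqdistxx ltxx.
split; [|split].
- rewrite /= divr_ge0 ?ler_pdivrMr /=; lra.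
- apply: divr_ge0 (ltW L0).
  by case: (ltrP (cross a b c) 0) => h; rewrite ?expr1 ?expr0; lra.
exists a, b, c; do !split => //; rewrite ?ltW //; first exact: lt_trans ac_bc bc_ab.
exists (frame a b (cross a b c < 0)); split; first exact: frame_similitude.
split; first by rewrite /frame /dotA /cross !subrr !(mulr0, mul0r, addr0, subr0).
split=> //; rewrite /frame; congr pair.
  by rewrite -[RHS](divff (lt0r_neq0 L0)) /dotA /sqdist /=; congr (_ / _); ring.
by rewrite (_ : cross a b b = 0) ?mulr0 ?mul0r // /cross; ring.
Qed.

Lemma char_point_shape t : 0 < sqAB t -> shape_x t < 2^-1 ->
  shape_x t ^+ 2 + shape_h2 t < 2 * shape_x t -> (char_point t).1 = shape_x t.
Proof.
case: t => [[a b] c] L0 x_lt S_lt.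
have I_eq : dotA (a, b, c) = shape_x (a, b, c) * sqAB (a, b, c).
  by rewrite /shape_x divfK ?lt0r_neq0.
have S_eq : sqAC (a, b, c) = (shape_x (a, b, c) ^+ 2 + shape_h2 (a, b, c)) * sqAB (a, b, c).
  by rewrite /shape_h2 addrC subrK divfK ?lt0r_neq0.
have BC := sqdist_cosine a b c; rewrite I_eq S_eq in BC.
have bc_ab : sqdist b c < sqdist a b by rewrite BC; change (sqdist a b) with (sqAB (a, b, c)); nra.
have ac_bc : sqdist a c < sqdist b c.
  by rewrite BC; change (sqdist a c) with (sqAC (a, b, c)); rewrite S_eq; nra.
rewrite /char_point; case: xgetP => [xy _ | /(_ _ (is_char_point_frame bc_ab ac_bc))//].
move=> [_ [_ [p [q [r [pqr [qr_pq [pr_pq [pr_qr [f [Hf [fp [fq fr]]]]]]]]]]]]].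
have [Ep Eq Er] := perm_sides_sorted bc_ab ac_bc pqr qr_pq pr_pq pr_qr.
by subst p q r; apply: similitude_abscissa Hf fp fq fr.
Qed.

Lemma char_point_x_itv t : 0 <= (char_point t).1 <= 2^-1.
Proof.
case: t => [[a b] c]; rewrite /char_point; case: xgetP => [xy _ [] //|_].
by rewrite lexx invr_ge0 ler0n.
Qed.

Lemma approach_char_point (x0 eps : R) : 0 < x0 < 2^-1 -> 0 < eps ->
  exists N, forall t, tri_ok t -> exists2 s : seq nat,
    size s = N /\ all (fun k => k < 6)%N s & `|(char_point (run t s)).1 - x0| < eps.
Proof.
move=> /andP[x0_gt x0_lt] e0.
pose eta := Num.min eps (Num.min (x0 / 2) ((2^-1 - x0) / 2)).
have := le_refl eta; rewrite {2}/eta !le_min => /and3P[eta_e eta_x0 eta_x1].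
have eta0 : 0 < eta by rewrite /eta !lt_min e0 /=; apply/andP; split; lra.
have [n n_small] : exists n, (2 / 3 : R) ^+ n < eta / 4.
  by apply: exists_expr_lt; [apply/andP; split | rewrite divr_gt0]; lra.
have q0 : 0 <= (2 / 3 : R) ^+ n by rewrite exprn_ge0.
have x0_itv : -1 <= x0 <= 2 by apply/andP; split; lra.
have [s [sz s6 [x' /andP[x'_ge x'_le] Hs]]] := steer_shape n x0_itv.
(* A first move bounds the shape, which makes the contraction estimate uniform. *)
exists n.+1 => t ok; have [l l6 [L1 S1]] := exists_subtri_shape_bounded ok.
exists (l :: s); first by rewrite /= sz l6.
rewrite /run /= -/(run _ s); set t1 := subtri t l in L1 S1 *.
have [L2 E1 E2] := Hs t1 L1; have h1_ge0 := shape_h2_ge0 L1.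
have u1_bound : shape_x t1 ^+ 2 + shape_h2 t1 <= 4.
  by rewrite /shape_h2 addrC subrK ler_pdivrMr.
have d_bound : `|shape_x t1 - x'| <= 4 by rewrite ler_norml; apply/andP; split; nra.
have u_near : `|shape_x (run t1 s) - x0| < eta.
  by rewrite E1 normrM ger0_norm //; apply: le_lt_trans (ler_wpM2l q0 d_bound) _; lra.
have h_small : shape_h2 (run t1 s) < eta.
  have q1 : (2 / 3 : R) ^+ n <= 1 by apply: exprn_ile1; lra.
  rewrite E2 (_ : 4 / 9 = (2 / 3) * (2 / 3)); last by field.
  rewrite exprMn -mulrA; apply: le_lt_trans (_ : _ <= (2 / 3) ^+ n * 4) _; last lra.
  by rewrite ler_wpM2l //; nra.
move: u_near; rewrite ltr_norml => /andP[u_ge u_le].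
rewrite char_point_shape //; first by rewrite ltr_norml; apply/andP; split; lra.
- lra.
- have := shape_h2_ge0 L2; nra.
Qed.

End Geometry.

Section Chain.
Variables (R : realType) (T0 : triangle R).

Lemma tri_chain_ext (k k' : nat -> nat) n : (forall i, (i < n)%N -> k i = k' i) ->
  tri_chain T0 k n = tri_chain T0 k' n.
Proof.
elim: n => [|n IH] E //=.
by rewrite IH ?E // => i /ltnW; apply: E.
Qed.

Lemma tri_chain_cat p k s :
  tri_chain T0 (cat_word p k s) (p + size s) = run (tri_chain T0 k p) s.
Proof.
elim/last_ind: s => [|s x IH].
  by rewrite addn0 /run /=; apply: tri_chain_ext => i; apply: cat_word_ltn.
rewrite size_rcons addnS /= /run foldl_rcons -/(run _ s) -IH.
rewrite cat_word_addn nth_rcons ltnn eqxx.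
by congr subtri; apply: tri_chain_ext => i; apply: cat_word_rcons.
Qed.

Lemma tri_ok_chain k n : tri_ok T0 -> tri_ok (tri_chain T0 k n).
Proof. by move=> ok; elim: n => //= n IH; apply: tri_ok_subtri. Qed.

End Chain.

Section Recurrence.
Context (R : realType) (d : measure_display) (Omega : measurableType d)
  (P : probability Omega R) (b : nat) (xi : nat -> Omega -> nat).
Hypothesis b_gt0 : (0 < b)%N.
Hypothesis xi_meas : forall n k, measurable [set w | xi n w = k].
Hypothesis P_prefix : forall n (k : nat -> nat), (forall i, (i <= n)%N -> (k i < b)%N) ->
  P [set w | forall i, (i <= n)%N -> xi i w = k i] = ((b%:R^-1 : R) ^+ n.+1)%:E.

(* Measures are stated through the content coercion, which is the form in
   which the library lemmas on contents (measureD, measureU2, ...) match. *)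
Local Notation mu := (P : {content set Omega -> \bar R}).

Definition admissible n (k : nat -> nat) := forall i, (i < n)%N -> (k i < b)%N.

Definition cylinder n (k : nat -> nat) := [set w | forall i, (i < n)%N -> xi i w = k i].

Lemma admissible_cat q k s : admissible q k -> all (fun x => x < b)%N s ->
  admissible (q + size s) (cat_word q k s).
Proof.
move=> kq /all_nthP sb i hi; rewrite /cat_word; case: (ltnP i q) => iq; first exact: kq.
by apply: sb; lia.
Qed.

Lemma cylinder0 k : cylinder 0 k = setT.
Proof. by rewrite predeqE. Qed.

Lemma measurable_cylinder n k : measurable (cylinder n k).
Proof.
elim: n => [|n IH]; first by rewrite cylinder0.
rewrite (_ : cylinder n.+1 k = cylinder n k `&` [set w | xi n w = k n]).
  exact: measurableI.
apply/seteqP; split=> w /=; first by move=> H; split=> [i /ltnW|]; apply: H.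
by move=> [H1 H2] i; rewrite ltnS leq_eqVlt => /predU1P[-> //|]; apply: H1.
Qed.

Lemma P_cylinder n k : admissible n k -> mu (cylinder n k) = ((b%:R^-1 : R) ^+ n)%:E.
Proof. by case: n => [|n] kn; [rewrite cylinder0; apply: probability_setT | apply: P_prefix]. Qed.

(* The cylinder of [k] up to time [q] is split according to the next [M] letters,
   the word [digits b M c] being coded by [c < b ^ M]. *)
Definition block q M k c := cylinder (q + M) (cat_word q k (digits b M c)).

Definition refinement q M k := \big[setU/set0]_(c < b ^ M) block q M k c.

Lemma admissible_block q M k c : admissible q k -> admissible (q + M) (cat_word q k (digits b M c)).
Proof.
move=> kq; have sz : size (digits b M c) = M by apply: size_mkseq.
rewrite -{1}sz; apply: admissible_cat kq _.
by apply/allP => x /mapP[i _ ->]; apply: digit_lt.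
Qed.

Lemma block_sub q M k c : block q M k c `<=` cylinder q k.
Proof. by move=> w Hw i iq; rewrite Hw ?cat_word_ltn ?ltn_addr. Qed.

Lemma trivIset_block q M k :
  trivIset setT (fun c => if (c < b ^ M)%N then block q M k c else set0).
Proof.
move=> c c' _ _ [w []]; case: ifP => // c_lt; case: ifP => // c'_lt Hc Hc'.
apply: (digit_inj b_gt0 c_lt c'_lt) => i iM.
rewrite -(nth_mkseq 0%N (digit b c) iM) -(nth_mkseq 0%N (digit b c') iM) -!(cat_word_addn q k).
by rewrite -Hc ?Hc' ?ltn_add2l.
Qed.

Lemma P_refinement q M k : admissible q k -> mu (refinement q M k) = mu (cylinder q k).
Proof.
move=> kq; rewrite P_cylinder //.
pose F c := if (c < b ^ M)%N then block q M k c else set0.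
have mF c : measurable (F c) by rewrite /F; case: ifP => // _; apply: measurable_cylinder.
rewrite (_ : refinement q M k = \big[setU/set0]_(c < b ^ M) F c); last first.
  by apply: eq_bigr => c _; rewrite /F ltn_ord.
rewrite measure_bigsetU //; last exact: trivIset_block.
rewrite (eq_bigr (fun _ => ((b%:R^-1 : R) ^+ (q + M))%:E)); last first.
  by move=> c _; rewrite /F ltn_ord; apply: P_cylinder; apply: admissible_block.
rewrite sumEFin sumr_const card_ord exprD -[_ *+ (b ^ M)]mulr_natr natrX -mulrA -exprMn.
by rewrite mulVf ?pnatr_eq0 -?lt0n // expr1n mulr1.
Qed.

Lemma P_cylinder_refinement q M k : admissible q k ->
  mu (cylinder q k `\` refinement q M k) = 0%E.
Proof.
move=> kq; have mR : measurable (refinement q M k).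
  by apply: bigsetU_measurable => c _; apply: measurable_cylinder.
rewrite measureD //; first last.
- by rewrite (P_cylinder kq) ltry.
- exact: measurable_cylinder.
rewrite setIidr; first by rewrite P_refinement // subee // P_cylinder.
by move=> w; rewrite /refinement -bigcup_mkord => -[c _]; apply: block_sub.
Qed.

(* Events defined through the chain need not be measurable, so they are bounded
   through measurable supersets. *)
Definition outer_le (A : set Omega) (x : R) :=
  exists V, [/\ measurable V, A `<=` V & (mu V <= x%:E)%E].

Lemma outer_le_trans A x y : outer_le A x -> x <= y -> outer_le A y.
Proof.
by move=> [V [mV AV PV]] xy; exists V; split=> //; apply: le_trans PV _; rewrite lee_fin.
Qed.

Lemma outer_le_refinement q M k A (beta : nat -> R) : admissible q k ->
  (forall c, (c < b ^ M)%N -> outer_le (block q M k c `&` A) (beta c)) ->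
  outer_le (cylinder q k `&` A) (\sum_(c < b ^ M) beta c).
Proof.
move=> kq HA.
have /choice[V HV] : forall c, exists V, (c < b ^ M)%N ->
    [/\ measurable V, block q M k c `&` A `<=` V & (mu V <= (beta c)%:E)%E].
  move=> c; case: (ltnP c (b ^ M)) => [/HA[V HV]|_]; first by exists V.
  by exists set0.
have mV c : (c < b ^ M)%N -> measurable (V c) by case/HV.
have mU : measurable (\big[setU/set0]_(c < b ^ M) V c).
  by apply: bigsetU_measurable => c _; apply: mV.
have mD : measurable (cylinder q k `\` refinement q M k).
  apply: measurableD; first exact: measurable_cylinder.
  by apply: bigsetU_measurable => c _; apply: measurable_cylinder.
exists ((cylinder q k `\` refinement q M k) `|` \big[setU/set0]_(c < b ^ M) V c).
split; first exact: measurableU.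
  move=> w [wq wA]; have [wR|] := pselect (refinement q M k w); last by left.
  right; move: wR; rewrite /refinement -!bigcup_mkord => -[c c_lt wc].
  by exists c => //; have [_ + _] := HV c c_lt; apply.
apply: le_trans (measureU2 _ _ _) _ => //; rewrite P_cylinder_refinement // add0e.
apply: le_trans (@content_subadditive _ _ _ mu _ V (b ^ M)%N _ mU (@subset_refl _ _)) _.
  by move=> c /= c_lt; apply: mV.
by rewrite -sumEFin lee_sum // => c _; have [] := HV c (ltn_ord c).
Qed.

Lemma negligible_outer_le A (u : nat -> R) : (forall m, outer_le A (u m)) ->
  (forall e, 0 < e -> exists m, u m < e) -> P.-negligible A.
Proof.
move=> /choice[V HV] u_small; have mV m : measurable (V m) by case: (HV m).
exists (\bigcap_m V m); split.
- by apply: bigcapT_measurable.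
- apply/eqP; rewrite -measure_le0; apply/lee_addgt0Pr => e e0; rewrite add0e.
  have [m um] := u_small e e0; have [_ _ PV] := HV m.
  apply: le_trans (le_measure _ _ _ _) (le_trans PV _); rewrite ?inE //.
    by apply: bigcapT_measurable.
    by move=> w /(_ m I).
  by rewrite lee_fin ltW.
- by move=> w Aw m _; have [_ + _] := HV m; apply.
Qed.

Section Avoiding.
Variable G : (nat -> nat) -> nat -> Prop.
Hypothesis G_prefix : forall k k' n, (forall i, (i < n)%N -> k i = k' i) -> G k n -> G k' n.
Variable N : nat.
Hypothesis G_reachable : forall p k, admissible p k ->
  exists2 s : seq nat, size s = N /\ all (fun x => x < b)%N s & G (cat_word p k s) (p + N).

Definition avoiding p := [set w | forall n, (p <= n)%N -> ~ G (xi^~ w) n].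

Local Notation rho := (1 - (b%:R^-1 : R) ^+ N).

Lemma outer_le_avoiding m p q k : (p <= q)%N -> admissible q k ->
  outer_le (cylinder q k `&` avoiding p) ((b%:R^-1) ^+ q * rho ^+ m).
Proof.
elim: m q k => [|m IH] q k pq kq.
  exists (cylinder q k); split; [exact: measurable_cylinder | by move=> w [] |].
  by rewrite P_cylinder // expr0 mulr1.
have pqN : (p <= q + N)%N by apply: leq_trans pq (leq_addr _ _).
have [s [sz sb] Gs] := G_reachable kq.
have [c0 c0_lt Ec0] := digits_surj b_gt0 sz sb.
(* Among the b ^ N blocks following [k], the block c0 of the word reaching G
   is avoided; the others are bounded by induction. *)
pose B := (b%:R^-1 : R) ^+ (q + N) * rho ^+ m.
apply: outer_le_trans (outer_le_refinement (M := N) (beta := fun c => if c == c0 then 0 else B) kq _) _.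
  move=> c c_lt; case: eqP => [->|_]; last by apply: IH => //; apply: admissible_block.
  exists set0; split; [exact: measurable0 | move=> w [wc wA] | by rewrite measure0].
  apply: (wA (q + N) pqN).
  by apply: G_prefix Gs => i i_lt; rewrite -Ec0 wc.
rewrite (bigD1 (Ordinal c0_lt)) //= eqxx add0r.
rewrite (eq_bigr (fun _ => B)); last by move=> c; rewrite -val_eqE /= => /negbTE ->.
rewrite sumr_const cardC1 card_ord -[B *+ _]mulr_natr -subn1 natrB ?expn_gt0 ?b_gt0 //.
have XY : (b%:R : R) ^+ N = ((b%:R^-1 : R) ^+ N)^-1 by rewrite exprVn invrK.
have Y0 : (b%:R^-1 : R) ^+ N != 0 by rewrite expf_neq0 // invr_eq0 pnatr_eq0 -lt0n.
by rewrite natrX XY /B exprD exprS le_eqVlt; apply/orP; left; apply/eqP; field.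
Qed.

Lemma negligible_avoiding p : P.-negligible (avoiding p).
Proof.
have u0 : 0 < (b%:R^-1 : R) by rewrite invr_gt0 ltr0n.
have u1 : (b%:R^-1 : R) <= 1 by rewrite invf_le1 ?ltr0n // ler1n.
have rho_itv : 0 <= rho < 1.
  have := exprn_gt0 N u0; have := exprn_ile1 N (ltW u0) u1.
  by move=> *; apply/andP; split; lra.
apply: (negligible_outer_le (u := fun m => rho ^+ m)) => [m|]; last by move=> e; apply: exists_expr_lt.
have k0 : admissible 0 (fun _ => 0%N) by [].
rewrite -[avoiding p]setTI -(cylinder0 (fun _ => 0%N)).
apply: outer_le_trans (outer_le_refinement (M := p) (beta := fun _ => (b%:R^-1) ^+ p * rho ^+ m) k0 _) _.
  by move=> c _; apply: outer_le_avoiding => //; apply: admissible_block.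
rewrite sumr_const card_ord -[_ *+ _]mulr_natr natrX -mulrA mulrCA -exprMn.
by rewrite mulVf ?pnatr_eq0 -?lt0n // expr1n mulr1.
Qed.

Theorem recurrence : {ae P, forall w, forall p, exists2 n, (p <= n)%N & G (xi^~ w) n}.
Proof.
apply: ae_foralln => p; apply: negligibleS (negligible_avoiding p) => w /= Hw n pn Gn.
by apply: Hw; exists n.
Qed.

End Avoiding.

End Recurrence.

Lemma limit_set_itv (R : realType) (a b : R) (X : nat -> R) : a < b ->
  (forall n, a <= X n <= b) ->
  (forall (q : rat) (j p : nat), a < ratr q < b ->
     exists2 n, (p <= n)%N & `|X n - ratr q| < j.+1%:R^-1) ->
  \bigcap_(p in [set: nat]) closure [set X n | n in [set n | (p <= n)%N]] = `[a, b]%classic.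
Proof.
move=> ab X_itv X_dense.
have X_near (y : R) p del : a <= y <= b -> 0 < del ->
    exists2 n, (p <= n)%N & `|y - X n| < del.
  move=> /andP[ya yb] del0.
  have lohi : Num.max a (y - del / 2) < Num.min b (y + del / 2).
    by rewrite gt_max !lt_min; apply/andP; split; apply/andP; split; lra.
  have [q] := rat_in_itvoo lohi; rewrite in_itv /= gt_max lt_min.
  move=> /andP[/andP[aq yq] /andP[qb qy]].
  have del2 : 0 < del / 2 by lra.
  have [j] := ltr_add_invr del2; rewrite add0r => j_lt.
  have [|n pn] := X_dense q j p; first by rewrite aq qb.
  rewrite ltr_norml => /andP[Xq qX]; exists n => //.
  (* [ratr q] and [j.+1%:R^-1] occur with different instance paths, which lra
     would read as distinct atoms; [set] identifies them. *)
  set r : R := ratr q in yq qy Xq qX; set e : R := j.+1%:R^-1 in j_lt Xq qX.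
  by rewrite ltr_norml; apply/andP; split; lra.
apply/seteqP; split.
  have tail_sub : [set X n | n in [set n | (0 <= n)%N]] `<=` `[a, b]%classic.
    by move=> _ [n _ <-]; rewrite /= in_itv /= X_itv.
  move=> y /(_ 0%N I) /(closureS tail_sub).
  by rewrite -(closure_id _).1 //; apply: itv_closed.
move=> y; rewrite /= in_itv /= => y_itv p _ B /nbhs_ballP[del /= del0 delB].
have [n pn Xn] := X_near y p del y_itv del0.
by exists (X n); split; [exists n | apply: delB; rewrite -ball_normE].
Qed.

Lemma ae_forall_countable d (T : measurableType d) (R : realType)
    (mu : {measure set T -> \bar R}) (I : countType) (Q : I -> T -> Prop) :
  (forall i, {ae mu, forall x, Q i x}) -> {ae mu, forall x, forall i, Q i x}.
Proof.
move=> HQ.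
have /ae_foralln : forall n, {ae mu, forall x, if unpickle n is Some i then Q i x else True}.
  by move=> n; case: (unpickle n) => [i|]; [apply: HQ | apply: nearW].
by apply: filterS => x Hx i; have := Hx (pickle i); rewrite pickleK.
Qed.

Section CharPointRecurrence.
Context (R : realType) (d : measure_display) (Omega : measurableType d)
  (P : probability Omega R) (xi : nat -> Omega -> nat) (T0 : triangle R).
Hypothesis T0_ok : tri_ok T0.
Hypothesis xi_meas : forall n k, measurable [set w | xi n w = k].
Hypothesis P_prefix : forall n (k : nat -> nat), (forall i, (i <= n)%N -> (k i < 6)%N) ->
  P [set w | forall i, (i <= n)%N -> xi i w = k i] = ((6^-1 : R) ^+ n.+1)%:E.

Lemma char_point_recurrent (x0 eps : R) : 0 < x0 < 2^-1 -> 0 < eps ->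
  {ae P, forall w, forall p, exists2 n, (p <= n)%N &
     `|(char_point (tri_chain T0 (xi^~ w) n)).1 - x0| < eps}.
Proof.
move=> x0_itv eps_gt0; have [N HN] := approach_char_point x0_itv eps_gt0.
pose G k n := `|(char_point (tri_chain T0 k n)).1 - x0| < eps.
have G_prefix k k' n : (forall i, (i < n)%N -> k i = k' i) -> G k n -> G k' n.
  by rewrite /G => /(tri_chain_ext T0) ->.
have G_reachable p k : admissible 6 p k -> exists2 s : seq nat,
    size s = N /\ all (fun x => x < 6)%N s & G (cat_word p k s) (p + N).
  move=> _; have [s [sz s6] Hs] := HN _ (tri_ok_chain k p T0_ok).
  by exists s => //; rewrite /G -sz tri_chain_cat.
have six_gt0 : (0 < 6)%N by [].
exact: (recurrence six_gt0 xi_meas P_prefix G_prefix G_reachable).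
Qed.

End CharPointRecurrence.

Theorem theorem3 (R : realType) (d : measure_display) (Omega : measurableType d)
    (P : probability Omega R) (xi : nat -> Omega -> nat) (T0 : triangle R) :
  tri_ok T0 ->
  (forall n k, measurable [set w | xi n w = k]) ->
  (forall (n : nat) (k : nat -> nat), (forall i, (i <= n)%N -> (k i < 6)%N) ->
     P [set w | forall i, (i <= n)%N -> xi i w = k i] = ((6^-1 : R) ^+ n.+1)%:E) ->
  {ae P, forall w,
     let X := fun n => (char_point (tri_chain T0 (fun m => xi m w) n)).1 in
     \bigcap_(p in [set: nat]) closure [set X n | n in [set n | (p <= n)%N]]
       = `[0, 2^-1]%classic}.
Proof.
move=> T0_ok xi_meas P_prefix.
have X_near (qj : rat * nat) : {ae P, forall w, 0 < (ratr qj.1 : R) < 2^-1 ->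
    forall p, exists2 n, (p <= n)%N &
      `|(char_point (tri_chain T0 (xi^~ w) n)).1 - ratr qj.1| < qj.2.+1%:R^-1}.
  case: qj => q j /=; have [q_itv|_] := boolP (0 < (ratr q : R) < 2^-1).
    have j_pos : 0 < (j.+1%:R : R)^-1 by rewrite invr_gt0.
    apply: filterS (char_point_recurrent T0_ok xi_meas P_prefix q_itv j_pos).
    by move=> w Hw _.
  exact: nearW.
apply: filterS (ae_forall_countable X_near) => w Hw /=.
apply: limit_set_itv => [|n|q j p q_itv]; first by rewrite invr_gt0.
  exact: char_point_x_itv.
exact: (Hw (q, j)).
Qed.
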